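(* A cubic graph $H$ that is $2$-connected but not $3$-connected can be decomposed, via the $H$-decomposition along nontrivial $2$-edge cuts, into a collection of cubic loopless graphs $\{H_i\}$ each of which is $3$-connected.
   Context: Graphs are finite; multiple edges allowed, loops not. For a cubic graph $G$ with a $2$-edge cut $E_C=\{s_{11}s_{21},s_{12}s_{22}\}$ (the $s_{1j}$ on one side, the $s_{2j}$ on the other), let $G_1',G_2'$ be the subgraphs induced on the two sides of $G\setminus E_C$, and let $G_i$ be $G_i'$ with the edge $s_{i1}s_{i2}$ added; we write $G=G_1\,H\,G_2$. The cut is nontrivial if $G_1$ and $G_2$ each have fewer vertices than $G$. Decomposing via $H$ means repeatedly replacing a graph in the collection (starting from $\{H\}$) by the two graphs $G_1,G_2$ arising from a nontrivial $2$-edge cut of it. *)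

From mathcomp Require Import all_boot.
From Stdlib Require Import Relations.

Set Implicit Arguments.
Unset Strict Implicit.
Unset Printing Implicit Defensive.

(* A finite multigraph: a duplicate-free list of vertex labels (naturals) and a
   list of edges (multiset of unordered pairs, each stored as an ordered pair;
   a pair (v,v) would be a loop).  Keeping the original labels makes the
   split into G_1, G_2 canonical (no relabelling needed). *)
Record mgraph := MGraph { gV : seq nat ; gE : seq (nat * nat) }.

Definition well_formed (G : mgraph) : Prop :=
  uniq (gV G) /\ forall e, e \in gE G -> (e.1 \in gV G) /\ (e.2 \in gV G).

Definition loopless (G : mgraph) : Prop :=
  forall e, e \in gE G -> e.1 != e.2.

(* degree; a loop would count twice *)
Definition deg (G : mgraph) (v : nat) : nat :=
  count (fun e : nat * nat => e.1 == v) (gE G) + count (fun e : nat * nat => e.2 == v) (gE G).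

Definition cubic (G : mgraph) : Prop := forall v, v \in gV G -> deg G v = 3.

Definition adj (E : seq (nat * nat)) (u v : nat) : Prop :=
  ((u, v) \in E) \/ ((v, u) \in E).

Definition connected (G : mgraph) : Prop :=
  (0 < size (gV G)) /\
  forall u v, u \in gV G -> v \in gV G -> clos_refl_trans nat (adj (gE G)) u v.

Definition delete_edges (G : mgraph) (I : seq nat) : mgraph :=
  MGraph (gV G) [seq nth (0, 0) (gE G) i | i <- iota 0 (size (gE G)) & i \notin I].

Definition k_edge_connected (k : nat) (G : mgraph) : Prop :=
  1 < size (gV G) /\ forall I : seq nat, size I < k -> connected (delete_edges G I).

Definition cross (G : mgraph) (S : seq nat) : seq (nat * nat) :=
  [seq e <- gE G | (e.1 \in S) != (e.2 \in S)].

Definition orient (S : seq nat) (e : nat * nat) : nat * nat :=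
  if e.1 \in S then e else (e.2, e.1).

Definition side1 (G : mgraph) (S : seq nat) : seq nat := [seq v <- gV G | v \in S].
Definition side2 (G : mgraph) (S : seq nat) : seq nat := [seq v <- gV G | v \notin S].

Definition G1' (G : mgraph) (S : seq nat) : mgraph :=
  MGraph (side1 G S) [seq e <- gE G | (e.1 \in S) && (e.2 \in S)].
Definition G2' (G : mgraph) (S : seq nat) : mgraph :=
  MGraph (side2 G S) [seq e <- gE G | (e.1 \notin S) && (e.2 \notin S)].

(* with cut edges c1 = s11 s21, c2 = s12 s22 (s1j in S), G_1 = G_1' + s11 s12 and
   G_2 = G_2' + s21 s22 *)
Definition G1 (G : mgraph) (S : seq nat) : mgraph :=
  let c1 := orient S (nth (0, 0) (cross G S) 0) in
  let c2 := orient S (nth (0, 0) (cross G S) 1) in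
  MGraph (gV (G1' G S)) ((c1.1, c2.1) :: gE (G1' G S)).
Definition G2 (G : mgraph) (S : seq nat) : mgraph :=
  let c1 := orient S (nth (0, 0) (cross G S) 0) in
  let c2 := orient S (nth (0, 0) (cross G S) 1) in
  MGraph (gV (G2' G S)) ((c1.2, c2.2) :: gE (G2' G S)).

Definition two_edge_cut (G : mgraph) (S : seq nat) : Prop :=
  size (cross G S) = 2 /\ connected (G1' G S) /\ connected (G2' G S).

Definition nontrivial_two_edge_cut (G : mgraph) (S : seq nat) : Prop :=
  two_edge_cut G S /\
  size (gV (G1 G S)) < size (gV G) /\ size (gV (G2 G S)) < size (gV G).

Inductive decomp_step : seq mgraph -> seq mgraph -> Prop :=
| DStep (C1 C2 : seq mgraph) (G : mgraph) (S : seq nat) :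
    nontrivial_two_edge_cut G S ->
    decomp_step (C1 ++ G :: C2) (C1 ++ G1 G S :: G2 G S :: C2).

Definition decomposes_into (H : mgraph) (C : seq mgraph) : Prop :=
  clos_refl_trans (seq mgraph) decomp_step [:: H] C.

From mathcomp Require Import all_boot.
From Stdlib Require List.
From mathcomp Require Import zify.
From Stdlib Require Import Relations ClassicalEpsilon Classical.

Set Implicit Arguments.
Unset Strict Implicit.
Unset Printing Implicit Defensive.

(* Induction on the number of vertices.  If the cubic 2-edge-connected graph [G]
   is not 3-edge-connected, two edges [p], [q] separate it; by 2-edge-connectivity
   the component [S] of [G - {p, q}] containing one end is left by exactly these
   two edges, and both [S] and its complement are connected.  Each side, with the
   two cut edges replaced by an edge between their ends, is again cubic and
   2-edge-connected: a walk leaving the side through one cut edge returns through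
   the other, and the new edge short-cuts it.  It is loopless, because if both cut
   edges ended at one vertex its third edge would be a bridge.  Both sides are
   smaller than [G], so the induction hypothesis decomposes them. *)

Definition walk (E : seq (nat * nat)) := clos_refl_trans nat (adj E).

Definition crossing (P : pred nat) (e : nat * nat) := P e.1 != P e.2.

Definition end_in (P : pred nat) (e : nat * nat) := if P e.1 then e.1 else e.2.

Definition incident (a : nat) (e : nat * nat) := (e.1 == a) || (e.2 == a).

Lemma adj_sym E x y : adj E x y -> adj E y x.
Proof. by case=> H; [right|left]. Qed.

Lemma adjP E x y : adj E x y -> exists2 e, e \in E & e = (x, y) \/ e = (y, x).
Proof. by case=> H; [exists (x, y)|exists (y, x)]; try by [left|right]. Qed.

Lemma adj_mem E e x y : e \in E -> e = (x, y) \/ e = (y, x) -> adj E x y.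
Proof. by move=> eE [] ?; subst e; [left|right]. Qed.

Lemma walk_trans E x y z : walk E x y -> walk E y z -> walk E x z.
Proof. exact: rt_trans. Qed.

Section Walks.

Variable E : seq (nat * nat).

Lemma walk_sym x y : walk E x y -> walk E y x.
Proof.
elim=> [a b /adj_sym H|a|a b c _ H1 _ H2]; first exact: rt_step.
- exact: rt_refl.
- exact: walk_trans H2 H1.
Qed.

Lemma walk_edge e : e \in E -> walk E e.1 e.2.
Proof. by case: e => a b H; apply: rt_step; left. Qed.

Lemma walk_mem (V : seq nat) x y :
  (forall e, e \in E -> e.1 \in V /\ e.2 \in V) ->
  walk E x y -> x \in V -> y \in V.
Proof.
move=> EV /clos_rt_rtn1_iff; elim=> // b c /adjP [e eE ebc] _ IH /IH _.
by have [] := EV e eE; case: ebc => ->.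
Qed.

Lemma walk_exit (P : pred nat) x y : walk E x y -> ~~ P x -> P y ->
  exists2 e, e \in E &
    crossing P e /\ walk [seq e <- E | ~~ P e.1 && ~~ P e.2] x (end_in (predC P) e).
Proof.
move=> /clos_rt_rt1n_iff; elim=> [a /negP //|a b c /adjP [e eE eab] _ IH Pa Pc].
case Pb: (P b).
  exists e => //; split; last by case: eab => ->; rewrite /end_in /= ?Pa ?Pb; apply: rt_refl.
  by case: eab => ->; rewrite /crossing /= Pb (negbTE Pa).
have [e' e'E [Ce' W]] := IH (negbT Pb) Pc; exists e' => //; split => //.
have eF : e \in [seq e <- E | ~~ P e.1 && ~~ P e.2].
  by rewrite mem_filter eE andbT; case: eab => ->; rewrite /= Pa Pb.
exact: walk_trans (rt_step _ _ _ _ (adj_mem eF eab)) W.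
Qed.

Lemma walk_restrict (Q : pred nat) (E' : seq (nat * nat)) x y :
  {subset E' <= E} -> walk E' x y -> (forall z, walk E' x z -> Q z) ->
  walk [seq e <- E | Q e.1 && Q e.2] x y.
Proof.
move=> sub /clos_rt_rtn1_iff H HQ; elim: H => [|b c Hbc Hxb IH]; first exact: rt_refl.
have Qb : Q b by apply: HQ; apply/clos_rt_rtn1_iff.
have Qc : Q c by apply: HQ; apply: walk_trans (rt_step _ _ _ _ Hbc); exact/clos_rt_rtn1_iff.
have [e eE' ebc] := adjP Hbc.
have eF : e \in [seq e <- E | Q e.1 && Q e.2].
  by rewrite mem_filter sub // andbT; case: ebc => ->; rewrite Qb Qc.
exact: walk_trans IH (rt_step _ _ _ _ (adj_mem eF ebc)).
Qed.

End Walks.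

Lemma walk_sub E1 E2 x y : {subset E1 <= E2} -> walk E1 x y -> walk E2 x y.
Proof.
move=> sub; elim=> [a b /adjP [e eE eab]|a|a b c _ H1 _ H2].
- by apply: rt_step; apply: adj_mem (sub e eE) eab.
- exact: rt_refl.
- exact: walk_trans H1 H2.
Qed.

Lemma end_in_crossing P e : crossing P e -> P (end_in P e).
Proof. by rewrite /crossing /end_in; case: ifP => // _; case: (P e.2). Qed.

Lemma end_in_incident P e : incident (end_in P e) e.
Proof. by rewrite /incident /end_in; case: ifP; rewrite eqxx ?orbT. Qed.

Lemma end_in_pair (P : pred nat) x y : P x -> ~~ P y ->
  end_in P (x, y) = x /\ end_in P (y, x) = x.
Proof. by rewrite /end_in /= => -> /negbTE ->. Qed.

Lemma end_in_cases P e a : crossing P e -> end_in P e = a ->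
  e = (a, e.2) /\ ~~ P e.2 \/ e = (e.1, a) /\ ~~ P e.1.
Proof.
case: e => x y; rewrite /crossing /end_in /=.
by case: (P x); case: (P y) => //= _ ->; [left|right].
Qed.

Lemma end_in_eq P e w : crossing P e -> P w ->
  (e.1 == w) + (e.2 == w) = (end_in P e == w).
Proof.
rewrite /crossing /end_in; case P1: (P e.1); case P2: (P e.2) => //= _ Pw.
- by rewrite (_ : (e.2 == w) = false) ?addn0 //; apply: contraFF P2 => /eqP ->.
- by rewrite (_ : (e.1 == w) = false) //; apply: contraFF P1 => /eqP ->.
Qed.

Lemma crossingC (P : pred nat) e : crossing (fun v => ~~ P v) e = crossing P e.
Proof. by rewrite /crossing /=; case: (P e.1); case: (P e.2). Qed.

Lemma walk_contract (P : pred nat) E E1 a0 a1 x y :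
  (forall e, e \in E -> P e.1 -> P e.2 -> e \in E1) ->
  (forall e, e \in E -> crossing P e -> end_in P e \in [:: a0; a1]) ->
  walk E1 a0 a1 -> P x -> walk E x y -> P y -> walk E1 x y.
Proof.
move=> inner cross a01 Px W.
have near_a b : b \in [:: a0; a1] -> walk E1 x b <-> walk E1 x a0.
  rewrite !inE => /orP [] /eqP ->; split => // W'; first exact: walk_trans W' (walk_sym a01).
  exact: walk_trans W' a01.
(* A walk can leave or re-enter [P] only at [a0] or [a1], which [E1] joins. *)
suff inv z : walk E x z -> (P z -> walk E1 x z) /\ (~~ P z -> walk E1 x a0).
  exact: (inv y W).1.
move=> /clos_rt_rtn1_iff; elim=> [|b c /adjP [e eE ebc] _ [INb OUTb]].
  by split => [_|]; [apply: rt_refl|rewrite Px].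
case Pb: (P b); case Pc: (P c); split => // _.
- have eE1 : e \in E1 by apply: inner => //; case: ebc => ->.
  exact: walk_trans (INb Pb) (rt_step _ _ _ _ (adj_mem eE1 ebc)).
- have Ce : crossing P e by case: ebc => ->; rewrite /crossing /= Pb Pc.
  have [eb eb'] := end_in_pair (P := P) Pb (negbT Pc).
  have := cross e eE Ce; case: ebc => -> /=; rewrite ?eb ?eb' => /near_a [fwd _];
    exact: fwd (INb Pb).
- have Ce : crossing P e by case: ebc => ->; rewrite /crossing /= Pb Pc.
  have [ec ec'] := end_in_pair (P := P) Pc (negbT Pb).
  have := cross e eE Ce; case: ebc => -> /=; rewrite ?ec ?ec' => /near_a [_ bwd];
    exact: bwd (OUTb (negbT Pb)).
- exact: OUTb (negbT Pb).
Qed.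

Definition del_edges (l : seq (nat * nat)) (I : seq nat) :=
  [seq nth (0, 0) l i | i <- iota 0 (size l) & i \notin I].

Lemma delete_edgesE G I : delete_edges G I = MGraph (gV G) (del_edges (gE G) I).
Proof. by []. Qed.

Lemma count_filterC (T : eqType) (a p : pred T) s :
  count a (filter p s) + count a (filter (predC p) s) = count a s.
Proof. by rewrite -count_cat (permP (permEl (perm_filterC p s))). Qed.

Lemma count_nth (T : eqType) (x0 : T) (Q : pred T) s :
  count Q s = count (fun i => Q (nth x0 s i)) (iota 0 (size s)).
Proof. by rewrite -[in LHS](take_size s) -(map_nth_iota0 x0 (leqnn _)) count_map. Qed.

Section DelEdges.

Variable l : seq (nat * nat).

Lemma del_edgesP I e : e \in del_edges l I ->
  exists2 r, (r < size l) && (r \notin I) & e = nth (0, 0) l r.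
Proof.
by case/mapP=> r; rewrite mem_filter mem_iota add0n => /andP [rI /andP [_ rl]] ->; exists r;
  rewrite ?rl.
Qed.

Lemma mem_del_edges I r : r < size l -> r \notin I -> nth (0, 0) l r \in del_edges l I.
Proof. by move=> rl rI; apply: map_f; rewrite mem_filter mem_iota rI rl. Qed.

Lemma del_edges_sub I : {subset del_edges l I <= l}.
Proof. by move=> e /del_edgesP [r /andP [rl _] ->]; rewrite mem_nth. Qed.

Lemma del_edges_nil : del_edges l [::] = l.
Proof.
rewrite /del_edges (eq_filter (a2 := predT)) ?filter_predT //.
by rewrite (map_nth_iota0 _ (leqnn _)) take_size.
Qed.

Lemma del_edges_out p : size l <= p -> del_edges l [:: p] = l.
Proof.
move=> pl; rewrite /del_edges (eq_in_filter (a2 := predT)) ?filter_predT.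
  by rewrite (map_nth_iota0 _ (leqnn _)) take_size.
move=> i; rewrite mem_iota add0n inE => /andP [_ il] /=.
by apply: contraTneq il => ->; rewrite -leqNgt.
Qed.

Lemma del_edges_valid I : del_edges l I = del_edges l [seq i <- undup I | i < size l].
Proof.
rewrite /del_edges; congr map; apply: eq_in_filter => i.
by rewrite mem_iota add0n => /andP [_ il]; rewrite mem_filter mem_undup il.
Qed.

Lemma count_del_edges1 (Q : pred (nat * nat)) p : p < size l ->
  count Q (del_edges l [:: p]) + Q (nth (0, 0) l p) = count Q l.
Proof.
move=> pl; rewrite [RHS](count_nth (0, 0)); set F := fun i => _.
rewrite -(count_filterC F (pred1 p)).
rewrite addnC /del_edges count_map; congr (_ + _); last first.
  by congr count; apply: eq_filter => i; rewrite inE.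
rewrite count_filter (eq_count (a2 := fun i => (i == p) && F p)); last first.
  by move=> i /=; rewrite andbC; case: eqP => // ->.
rewrite -/(F p); case: (F p).
  rewrite (eq_count (a2 := pred1 p)) ?count_uniq_mem ?iota_uniq ?mem_iota ?pl //.
  by move=> i; rewrite andbT.
by rewrite (eq_count (a2 := pred0)) ?count_pred0 // => i; rewrite andbF.
Qed.

End DelEdges.

Lemma del_edges_cons e l k : del_edges (e :: l) [:: k.+1] = e :: del_edges l [:: k].
Proof.
rewrite /del_edges /= -[1]/(1 + 0) iotaDl /= filter_map -map_comp.
by congr (_ :: map _ _); apply: eq_filter => i; rewrite /= !inE.
Qed.

Lemma del_edges0 e l : del_edges (e :: l) [:: 0] = l.
Proof.
rewrite /del_edges /= -[1]/(1 + 0) iotaDl filter_map -map_comp.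
rewrite (eq_filter (a2 := predT)) ?filter_predT //.
by rewrite (eq_map (g := nth (0, 0) l)) // (map_nth_iota0 _ (leqnn _)) take_size.
Qed.

(* Edges are deleted by position and may have parallel copies, so membership is
   settled by counting multiplicities. *)
Lemma mem_del_edges_filter (Q : pred (nat * nat)) l k e :
  k < size (filter Q l) -> Q e ->
  e \in del_edges l [:: index (nth (0, 0) (filter Q l) k) l] ->
  e \in del_edges (filter Q l) [:: k].
Proof.
move=> kQ Qe; set f := nth _ _ k.
have fl : f \in l by have := mem_nth (0, 0) kQ; rewrite mem_filter => /andP [].
have cQ : count (pred1 e) (filter Q l) = count (pred1 e) l.
  by rewrite count_filter; apply: eq_count => x /=; case: eqP => // ->.
have fi : index f l < size l by rewrite index_mem.
have := count_del_edges1 (pred1 e) kQ; have := count_del_edges1 (pred1 e) fi.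
rewrite nth_index // cQ -/f -!has_pred1 !has_count.
by move: (count _ _) (count _ _) (count _ _) (_ == _ : nat) => a b c d; lia.
Qed.

Lemma two_edge_connectedP G : 1 < size (gV G) -> connected G ->
  (forall r, r < size (gE G) -> connected (delete_edges G [:: r])) ->
  k_edge_connected 2 G.
Proof.
case: G => V E /= sz con con1; split=> // -[|r [|? ?]] //= _.
  by rewrite delete_edgesE del_edges_nil.
by case: (ltnP r (size E)) => [/con1 //|rE]; rewrite delete_edgesE del_edges_out.
Qed.

Lemma not_connectedP V E : 0 < size V -> ~ connected (MGraph V E) ->
  exists u v, [/\ u \in V, v \in V & ~ walk E u v].
Proof.
move=> sz nc; apply: NNPP => H; apply: nc; split => // u v uV vV.
by apply: NNPP => nuv; apply: H; exists u, v.
Qed.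

Lemma sole_crossing_bridge (Q : pred nat) l r x y :
  count (crossing Q) l = 1 -> r < size l -> crossing Q (nth (0, 0) l r) ->
  Q x -> ~~ Q y -> ~ walk (del_edges l [:: r]) x y.
Proof.
move=> c1 rl Cr Qx Qy /walk_sym /walk_exit /(_ Qy Qx) [e eD [Ce _]].
have := count_del_edges1 (crossing Q) rl; rewrite c1 Cr addn1 => -[] /eqP.
by rewrite -leqn0 leqNgt -has_count => /hasP; apply; exists e.
Qed.

Lemma separating_pair G : k_edge_connected 2 G -> ~ k_edge_connected 3 G ->
  exists p q u v, [/\ p != q, (p < size (gE G)) && (q < size (gE G)),
    u \in gV G, v \in gV G & ~ walk (del_edges (gE G) [:: p; q]) u v].
Proof.
case=> sz ec nk3.
have [I sI nc] : exists2 I : seq nat, size I < 3 & ~ connected (delete_edges G I).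
  apply: NNPP => H; apply: nk3; split => // I sI.
  by apply: NNPP => nc; apply: H; exists I.
move: nc; rewrite delete_edgesE del_edges_valid; set J := filter _ _.
have uJ : uniq J by rewrite filter_uniq ?undup_uniq.
have sJ : size J < 3.
  by rewrite size_filter (leq_ltn_trans (count_size _ _)) // (leq_ltn_trans (size_undup I)).
have JE : all (fun i => i < size (gE G)) J by apply/allP => i; rewrite mem_filter => /andP [].
case: J uJ sJ JE => [|p [|q [|? ?]]] //=.
- by move=> _ _ _; case; exact: ec [::] isT.
- by move=> _ _ _; case; exact: ec [:: p] isT.
rewrite inE andbT => pq _ /and3P [pE qE _] /not_connectedP [|u [v [uV vV nuv]]].
  exact: ltnW.
by exists p, q, u, v; rewrite pE qE.
Qed.

Lemma deg_loopless G a : loopless G -> deg G a = count (incident a) (gE G).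
Proof.
move=> ll; rewrite /deg -count_predUI (eq_in_count (a1 := predI _ _) (a2 := pred0)).
  by rewrite count_pred0 addn0.
by move=> e eE /=; apply/andP => -[/eqP e1 /eqP e2]; move: (ll e eE); rewrite e1 e2 eqxx.
Qed.

Lemma end_in_mem G P e : well_formed G -> e \in gE G -> end_in P e \in gV G.
Proof. by case=> _ H /H [h1 h2]; rewrite /end_in; case: ifP. Qed.

Lemma size_gt1 (T : eqType) (s : seq T) x y : x \in s -> y \in s -> x != y -> 1 < size s.
Proof. by case: s => [|z [|z' s]] //; rewrite !inE => /eqP -> /eqP ->; rewrite eqxx. Qed.

Definition cut_edges G P := [seq e <- gE G | crossing P e].
Definition inner_edges G P := [seq e <- gE G | P e.1 && P e.2].
Definition cut_edge G P i := nth (0, 0) (cut_edges G P) i.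

Definition side G P := MGraph [seq v <- gV G | P v]
  ((end_in P (cut_edge G P 0), end_in P (cut_edge G P 1)) :: inner_edges G P).

Definition cubic_2ec G := [/\ well_formed G, loopless G, cubic G & k_edge_connected 2 G].

Definition two_cut_side G P := [/\ size (cut_edges G P) = 2,
  connected (MGraph [seq v <- gV G | P v] (inner_edges G P)) & has (predC P) (gV G)].

Section Side.

Variables (G : mgraph) (P : pred nat).
Hypotheses (hG : cubic_2ec G) (hP : two_cut_side G P).

Local Notation a0 := (end_in P (cut_edge G P 0)).
Local Notation a1 := (end_in P (cut_edge G P 1)).

Lemma cut_edgesE : cut_edges G P = [:: cut_edge G P 0; cut_edge G P 1].
Proof. by case: hP; rewrite /cut_edge; case: (cut_edges G P) => [|? [|? []]]. Qed.

Lemma cut_edgeP i : i < 2 -> cut_edge G P i \in gE G /\ crossing P (cut_edge G P i).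
Proof.
move=> i2; have [s2 _ _] := hP; rewrite -s2 in i2.
by have := mem_nth (0, 0) i2; rewrite mem_filter => /andP [].
Qed.

Lemma end_in_cut_edge i : i < 2 -> end_in P (cut_edge G P i) \in [seq v <- gV G | P v].
Proof.
case: hG => wf _ _ _ /cut_edgeP [cE cC].
by rewrite mem_filter end_in_crossing // end_in_mem.
Qed.

Lemma crossing_end_in e : e \in gE G -> crossing P e -> end_in P e \in [:: a0; a1].
Proof.
move=> eE Ce; have : e \in cut_edges G P by rewrite mem_filter Ce.
by rewrite cut_edgesE !inE => /orP [] /eqP ->; rewrite eqxx ?orbT.
Qed.

Lemma count_cut_inner (Q : pred (nat * nat)) :
  (forall e, Q e -> P e.1 || P e.2) ->
  count Q (gE G) = count Q (cut_edges G P) + count Q (inner_edges G P).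
Proof.
move=> QP; rewrite -(count_filterC Q (crossing P)); congr (_ + _).
rewrite !count_filter; apply: eq_count => e /=; case Qe: (Q e) => //=.
by move: (QP e Qe); rewrite /crossing; case: (P e.1); case: (P e.2).
Qed.

(* If both cut edges ended at the same vertex [a], the third edge at [a] would be
   the only edge leaving [P] minus [a], hence a bridge of [G]. *)
Lemma cut_ends_neq : a0 != a1.
Proof.
have [wf ll cu [_ ec]] := hG; have [_ _ /hasP [w wV Pw]] := hP.
have [[c0E C0] [c1E C1]] := (cut_edgeP (isT : 0 < 2), cut_edgeP (isT : 1 < 2)).
apply/negP => /eqP ea; set a := a0 in ea; have Pa : P a := end_in_crossing C0.
set Q := fun z => P z && (z != a).
have crossQ : {in gE G, crossing Q =1 predI (incident a) (predC (crossing P))}.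
  move=> e eE /=; case Ce: (crossing P e); rewrite /= ?andbF ?andbT.
    have : end_in P e = a by move: (crossing_end_in eE Ce); rewrite !inE -ea orbb => /eqP.
    case/(end_in_cases Ce) => -[-> Pe]; rewrite /crossing /Q /= eqxx andbF.
      by rewrite (negbTE Pe).
    by rewrite (negbTE Pe).
  move: Ce (ll e eE); rewrite /crossing /incident /Q.
  case: (e.1 =P a) => [->|_]; case: (e.2 =P a) => [->|_]; rewrite ?Pa ?eqxx //=;
    by case: (P e.1); case: (P e.2).
have Q1 : count (crossing Q) (gE G) = 1.
  have cut_a : count (incident a) (cut_edges G P) = 2.
    by rewrite cut_edgesE /= end_in_incident ea end_in_incident.
  have := cu a (end_in_mem _ wf c0E).
  rewrite deg_loopless // -(count_filterC _ (crossing P)) -/(cut_edges G P) cut_a.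
  by rewrite (eq_in_count crossQ) count_filter -[3]/(2 + 1) => /addnI.
have /hasP [f fE Cf] : has (crossing Q) (gE G) by rewrite has_count Q1.
have fi : index f (gE G) < size (gE G) by rewrite index_mem.
have fV : end_in Q f \in gV G := end_in_mem _ wf fE.
apply: (sole_crossing_bridge Q1 fi _ (end_in_crossing Cf) _
  ((ec [:: index f (gE G)] isT).2 _ _ fV wV)).
- by rewrite nth_index.
- by rewrite /Q (negbTE Pw).
Qed.

Lemma side_well_formed : well_formed (side G P).
Proof.
have [[uV EV] _ _ _] := hG; split; first exact: filter_uniq.
move=> e; rewrite inE => /orP [/eqP -> /=|]; first by rewrite !end_in_cut_edge.
rewrite mem_filter => /andP [/andP [P1 P2] /EV [h1 h2]].
by rewrite !mem_filter P1 P2 h1 h2.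
Qed.

Lemma side_loopless : loopless (side G P).
Proof.
have [_ ll _ _] := hG; move=> e; rewrite inE => /orP [/eqP -> //|].
  exact: cut_ends_neq.
by rewrite mem_filter => /andP [_ /ll].
Qed.

Lemma side_cubic : cubic (side G P).
Proof.
have [_ _ cu _] := hG.
have [[_ C0] [_ C1]] := (cut_edgeP (isT : 0 < 2), cut_edgeP (isT : 1 < 2)).
move=> w; rewrite mem_filter => /andP [Pw wV]; rewrite -(cu w wV) /deg /=.
rewrite (count_cut_inner (Q := fun e => e.1 == w)); last by move=> e /eqP ->; rewrite Pw.
rewrite (count_cut_inner (Q := fun e => e.2 == w)); last by move=> e /eqP ->; rewrite Pw orbT.
rewrite cut_edgesE /= -(end_in_eq C0 Pw) -(end_in_eq C1 Pw).
by move: (_ == w) (_ == w) (_ == w) (_ == w) (count _ _) (count _ _) => ? ? ? ? ? ?; lia.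
Qed.

Lemma side_2ec : k_edge_connected 2 (side G P).
Proof.
have [_ _ _ [_ ec]] := hG; have [_ [sz con] _] := hP.
have inner_sub : {subset inner_edges G P <= gE (side G P)}.
  by move=> e eI; rewrite inE eI orbT.
apply: two_edge_connectedP.
- exact: size_gt1 (end_in_cut_edge (isT : 0 < 2)) (end_in_cut_edge (isT : 1 < 2)) cut_ends_neq.
- by split=> // x y xV yV; apply: walk_sub inner_sub (con x y xV yV).
case=> [|k]; rewrite delete_edgesE /= ?del_edges0 // ltnS del_edges_cons => kI.
split=> // x y; rewrite !mem_filter => /andP [Px xV] /andP [Py yV].
set r := index (nth (0, 0) (inner_edges G P) k) (gE G).
apply: (walk_contract _ _ _ Px ((ec [:: r] isT).2 x y xV yV) Py).
- move=> e eD P1 P2; rewrite inE; apply/orP; right.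
  by apply: mem_del_edges_filter; rewrite ?P1 ?P2.
- by move=> e /del_edges_sub; exact: crossing_end_in.
- exact: walk_edge (mem_head _ _).
Qed.

Lemma side_size : size (gV (side G P)) < size (gV G).
Proof.
have [_ _ /hasP [w wV Pw]] := hP; rewrite /= size_filter -(count_predC P (gV G)).
by rewrite -addn1 leq_add2l -has_count; apply/hasP; exists w.
Qed.

Lemma side_cubic_2ec : cubic_2ec (side G P).
Proof.
by split; [exact: side_well_formed|exact: side_loopless|exact: side_cubic|exact: side_2ec].
Qed.

End Side.

Definition reachable E u w : bool :=
  if excluded_middle_informative (walk E u w) then true else false.

Lemma reachableP E u w : reflect (walk E u w) (reachable E u w).
Proof. by rewrite /reachable; case: excluded_middle_informative => h; constructor. Qed.

Definition component E (V : seq nat) u := [seq w <- V | reachable E u w].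

Section Separation.

Variables (G : mgraph) (p q u v : nat).
Hypotheses (wf : well_formed G) (ec : k_edge_connected 2 G) (pq : p != q)
  (pqE : (p < size (gE G)) && (q < size (gE G))) (uV : u \in gV G) (vV : v \in gV G)
  (nuv : ~ walk (del_edges (gE G) [:: p; q]) u v).

Local Notation E' := (del_edges (gE G) [:: p; q]).
Local Notation S := (component E' (gV G) u).
Local Notation inS := (fun w => w \in S).

Lemma mem_component w : w \in gV G -> (w \in S) = reachable E' u w.
Proof. by move=> wV; rewrite mem_filter wV andbT. Qed.

Lemma root_in_component : u \in S.
Proof. by rewrite mem_component //; apply/reachableP/rt_refl. Qed.

Lemma separated_notin_component : v \notin S.
Proof. by rewrite mem_component //; apply/reachableP. Qed.

Lemma component_closed e : e \in E' -> ~~ crossing inS e.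
Proof.
move=> eE'; have [e1V e2V] := wf.2 e (del_edges_sub eE').
rewrite /crossing negbK !mem_component //; apply/eqP.
apply/idP/idP => /reachableP h; apply/reachableP; first exact: walk_trans h (walk_edge eE').
exact: walk_trans h (walk_sym (walk_edge eE')).
Qed.

Lemma crossing_index r : r < size (gE G) -> crossing inS (nth (0, 0) (gE G) r) ->
  (r == p) || (r == q).
Proof.
move=> rE; apply: contraTT => rpq.
by apply/component_closed/mem_del_edges; rewrite ?inE.
Qed.

Lemma crossing_del_edges1 r e : e \in del_edges (gE G) [:: r] -> crossing inS e ->
  exists2 s, (s != r) && ((s == p) || (s == q)) & e = nth (0, 0) (gE G) s.
Proof.
case/del_edgesP => s /andP [sE sr] -> Cs; exists s => //.
by rewrite inE in sr; rewrite sr crossing_index.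
Qed.

(* [G - r] is connected, so some edge other than [r] leaves [S]; it can only be
   [p] or [q]. *)
Lemma crossing_other r : exists2 s, (s != r) && ((s == p) || (s == q)) &
  crossing inS (nth (0, 0) (gE G) s).
Proof.
have vu := walk_sym ((ec.2 [:: r] isT).2 u v uV vV).
have [e eD [Ce _]] := walk_exit vu separated_notin_component root_in_component.
by have [s rs es] := crossing_del_edges1 eD Ce; exists s; rewrite -?es.
Qed.

Lemma crossing_pq :
  crossing inS (nth (0, 0) (gE G) p) && crossing inS (nth (0, 0) (gE G) q).
Proof.
have [s /andP [sq /orP [/eqP sp | /eqP sq']] Cs] := crossing_other q.
  have [s' /andP [sp' /orP [/eqP sp'' | /eqP sq'']] Cs'] := crossing_other p.
    by rewrite sp'' eqxx in sp'.
  by rewrite sp in Cs; rewrite sq'' in Cs'; rewrite Cs Cs'.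
by rewrite sq' eqxx in sq.
Qed.

Lemma size_cut_component : size (cut_edges G inS) = 2.
Proof.
have [pE qE] := andP pqE; have [Cp Cq] := andP crossing_pq.
rewrite size_filter (count_nth (0, 0)).
rewrite (eq_in_count (a2 := predU (pred1 p) (pred1 q))); last first.
  move=> r; rewrite mem_iota /= => rE; apply/idP/idP; first exact: crossing_index.
  by case/orP => /eqP ->.
have disj : count (predI (pred1 p) (pred1 q)) (iota 0 (size (gE G))) = 0.
  by apply/eqP; rewrite -leqn0 leqNgt -has_count; apply/hasP => -[r _ /andP [/eqP -> /eqP]];
    apply/eqP.
have := count_predUI (pred1 p) (pred1 q) (iota 0 (size (gE G))).
by rewrite disj addn0 !count_uniq_mem ?iota_uniq ?mem_iota ?pE ?qE.
Qed.

Lemma component_connected :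
  connected (MGraph [seq w <- gV G | w \in S] (inner_edges G inS)).
Proof.
split=> [|x y]; first by rewrite size_filter -has_count; apply/hasP; exists u => //;
  exact: root_in_component.
rewrite !mem_filter => /andP [/andP [/reachableP ux _] xV].
move=> /andP [/andP [/reachableP uy _] _].
have xy := walk_trans (walk_sym ux) uy.
apply: (walk_restrict (Q := inS) (@del_edges_sub _ _) xy) => z xz.
have E'V e : e \in E' -> e.1 \in gV G /\ e.2 \in gV G by move/del_edges_sub/wf.2.
rewrite /= mem_component; last exact: walk_mem E'V (walk_trans ux xz) uV.
exact/reachableP/(walk_trans ux xz).
Qed.

(* The outer end of the cut edge [q] is reached from every vertex outside [S] by a
   walk in [G - p] towards [u], stopped where it first enters [S]. *)
Lemma component_compl_connected :
  connected (MGraph [seq w <- gV G | w \notin S] (inner_edges G (fun w => w \notin S))).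
Proof.
split; first by rewrite size_filter -has_count; apply/hasP; exists v => //;
  exact: separated_notin_component.
set b := end_in (predC inS) (nth (0, 0) (gE G) q).
suff to_b x : x \in gV G -> x \notin S -> walk (inner_edges G (fun w => w \notin S)) x b.
  move=> x y; rewrite mem_filter => /andP [xS xV]; rewrite mem_filter => /andP [yS yV].
  exact: walk_trans (to_b x xV xS) (walk_sym (to_b y yV yS)).
move=> xV xS; have xu := (ec.2 [:: p] isT).2 x u xV uV.
have [e eD [Ce W]] := walk_exit xu xS root_in_component.
have [s /andP [sp /orP [/eqP sp' | /eqP sq]] es] := crossing_del_edges1 eD Ce.
  by rewrite sp' eqxx in sp.
have qe : nth (0, 0) (gE G) q = e by rewrite es sq.
rewrite /b qe; apply: walk_sub W => f.
by rewrite mem_filter => /andP [fout /del_edges_sub fE]; rewrite mem_filter fout.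
Qed.

Lemma component_two_cut : two_cut_side G inS /\ two_cut_side G (fun w => w \notin S).
Proof.
split; split.
- exact: size_cut_component.
- exact: component_connected.
- by apply/hasP; exists v => //; exact: separated_notin_component.
- by rewrite /cut_edges (eq_filter (crossingC inS)); exact: size_cut_component.
- exact: component_compl_connected.
- by apply/hasP; exists u; rewrite //= negbK root_in_component.
Qed.

End Separation.

Lemma G1_side G S : G1 G S = side G (fun v => v \in S).
Proof. by rewrite /G1 /side /orient /end_in /cut_edge /cut_edges; case: ifP; case: ifP. Qed.

Lemma G2_side G S : G2 G S = side G (fun v => v \notin S).
Proof.
rewrite /G2 /side /cut_edge.
have -> : cut_edges G (fun v => v \notin S) = cross G S.
  by apply: eq_filter => e; rewrite /= crossingC.
by rewrite /orient /end_in; case: ifP; case: ifP.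
Qed.

Lemma two_cut_sides_nontrivial G S :
  two_cut_side G (fun v => v \in S) -> two_cut_side G (fun v => v \notin S) ->
  nontrivial_two_edge_cut G S.
Proof.
move=> h1 h2; have [c1 con1 _] := h1; have [_ con2 _] := h2.
by split; [|rewrite G1_side G2_side; split; exact: side_size].
Qed.

Lemma decomp_step_cat A B X Y :
  decomp_step A B -> decomp_step (X ++ A ++ Y) (X ++ B ++ Y).
Proof.
by case=> C1 C2 G S h; have := DStep (X ++ C1) (C2 ++ Y) h; rewrite -!catA.
Qed.

Lemma decomp_cat A B X Y : clos_refl_trans _ decomp_step A B ->
  clos_refl_trans _ decomp_step (X ++ A ++ Y) (X ++ B ++ Y).
Proof.
elim=> [a b H|a|a b c _ H1 _ H2]; first exact/rt_step/decomp_step_cat.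
- exact: rt_refl.
- exact: rt_trans H1 H2.
Qed.

Lemma decomposes_into_split G S C1 C2 : nontrivial_two_edge_cut G S ->
  decomposes_into (G1 G S) C1 -> decomposes_into (G2 G S) C2 ->
  decomposes_into G (C1 ++ C2).
Proof.
move=> nt d1 d2; apply: rt_trans (rt_step _ _ _ _ (DStep [::] [::] nt)) _.
apply: rt_trans (decomp_cat [::] [:: G2 G S] d1) _.
by have := decomp_cat C1 [::] d2; rewrite /= !cats0.
Qed.

Lemma cubic_2ec_decomposition n G : size (gV G) <= n -> cubic_2ec G ->
  exists C : seq mgraph, decomposes_into G C /\
    (forall Hi, List.In Hi C -> cubic Hi /\ loopless Hi /\ k_edge_connected 3 Hi).
Proof.
elim: n G => [|n IH] G sz hG.
  by have [_ _ _ [h _]] := hG; move: h sz; case: (size (gV G)).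
have [k3|nk3] := classic (k_edge_connected 3 G).
  exists [:: G]; split; first exact: rt_refl.
  by move=> Hi [<-|[]]; have [] := hG.
have [wf _ _ ec] := hG.
have [p [q [u [v [pq pqE uV vV nuv]]]]] := separating_pair ec nk3.
have [h1 h2] := component_two_cut wf ec pq pqE uV vV nuv.
have [C1 [d1 p1]] := IH _ (ltnSE (leq_trans (side_size h1) sz)) (side_cubic_2ec hG h1).
have [C2 [d2 p2]] := IH _ (ltnSE (leq_trans (side_size h2) sz)) (side_cubic_2ec hG h2).
exists (C1 ++ C2); split; last by move=> Hi /(List.in_app_or C1 C2 Hi) [/p1|/p2].
by apply: decomposes_into_split (two_cut_sides_nontrivial h1 h2) _ _;
  rewrite ?G1_side ?G2_side.
Qed.

Theorem theorem3 (H : mgraph) :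
  well_formed H -> loopless H -> cubic H ->
  k_edge_connected 2 H -> ~ k_edge_connected 3 H ->
  exists C : seq mgraph,
    decomposes_into H C /\
    (forall Hi, List.In Hi C -> cubic Hi /\ loopless Hi /\ k_edge_connected 3 Hi).
Proof.
move=> wf ll cu ec _.
exact: cubic_2ec_decomposition (leqnn _) (And4 wf ll cu ec).
Qed.
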